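(* Let $n\ge1$ and $N\ge1$ be integers and let $Z_1,\dots,Z_{n+N}$ be independent identically distributed random variables with values in $[0,1]$. Let $\overline X=\frac1n\sum_{k=1}^n Z_k$ and $\overline X'=\frac1{n+N}\sum_{k=1}^{n+N}Z_k$. Define $\varphi(n)=2\left(\frac{1+n/N}{1+\sqrt{n/N}}\right)^2$. Then $\varphi(n)>1.37$, and for every constant $\delta\ge 0$, $$\Pr(\overline X'\le \overline X-\delta)\le 2\exp\!\big(-\varphi(n)\,\delta^2 n\big),\qquad \Pr(\overline X'\ge \overline X+\delta)\le 2\exp\!\big(-\varphi(n)\,\delta^2 n\big).$$
   Context: In the application, $\overline X$ is an arm's current sample mean after $n$ samples, $\overline X'$ its sample mean after $N$ additional samples, and $\delta$ is the gap between the best and another arm's current sample mean (treated as a constant): for the empirically best arm $\alpha$ and second-best arm $\beta$ this bounds $\Pr(\overline X_\alpha'\le\overline X_\beta)$ with $\delta=\overline X_\alpha-\overline X_\beta$, and for another arm $i$ it bounds $\Pr(\overline X_i'\ge \overline X_\alpha)$ with $\delta=\overline X_\alpha-\overline X_i$. *)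

From HB Require Import structures.
From mathcomp Require Import all_boot all_order all_algebra.
From mathcomp Require Import all_classical all_reals all_analysis.
Set Implicit Arguments. Unset Strict Implicit. Unset Printing Implicit Defensive.
Import Order.TTheory GRing.Theory Num.Theory.
Local Open Scope classical_set_scope.
Local Open Scope ring_scope.

Definition mutually_independent d (T : measurableType d) (R : realType)
  (P : probability T R) (I : finType) (Z : I -> {RV P >-> R}) : Prop :=
  forall (J : {set I}) (B : I -> set R), (forall i, measurable (B i)) ->
    P (\bigcap_(i in [set i | i \in J]) (Z i @^-1` B i)) =
    (\prod_(i in J) P (Z i @^-1` B i))%E.

Definition identically_distributed d (T : measurableType d) (R : realType)
  (P : probability T R) (I : finType) (Z : I -> {RV P >-> R}) : Prop :=
  forall i j, distribution P (Z i) = distribution P (Z j).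

Definition phi (R : realType) (n N : nat) : R :=
  2 * ((1 + n%:R / N%:R) / (1 + Num.sqrt (n%:R / N%:R))) ^+ 2.

Definition Xbar d (T : measurableType d) (R : realType) (P : probability T R)
  (n N : nat) (Z : 'I_(n + N) -> {RV P >-> R}) (t : T) : R :=
  (\sum_(k < n + N | (k < n)%N) Z k t) / n%:R.

Definition Xbar' d (T : measurableType d) (R : realType) (P : probability T R)
  (n N : nat) (Z : 'I_(n + N) -> {RV P >-> R}) (t : T) : R :=
  (\sum_(k < n + N) Z k t) / (n + N)%:R.

(* With weights c_i = N on the first n samples and c_i = -n on the
   others, sum_i c_i Z_i = n (n + N) (Xbar - Xbar') and sum_i c_i = 0.  For such
   zero-sum weights and i.i.d. [0,1]-valued Z_i, Hoeffding's argument gives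
   P(T0 <= sum_i c_i Z_i) <= exp(-lam T0 + lam^2 (sum_i c_i^2) / 8), and
   lam = 4 delta / N yields exp(-2 (1 + n/N) delta^2 n), which is below the
   claimed bound because phi(n) <= 2 (1 + n/N).  Independence is stated for
   events, so instead of integrating products the Chernoff step is carried out
   on a discretization of mesh 1/m: the tail event is covered by disjoint
   product cells, Hoeffding's lemma is applied to each discretized law, and the
   O(1/m) error vanishes as m grows. *)

From HB Require Import structures.
From mathcomp Require Import all_boot all_order all_algebra.
From mathcomp Require Import all_classical all_reals all_analysis.
From mathcomp Require Import ring lra.
Import Order.TTheory GRing.Theory Num.Theory.
Import numFieldTopology.Exports numFieldNormedType.Exports.
Local Open Scope classical_set_scope.
Local Open Scope ring_scope.

Section DerivativeSign.
Context {R : realType}.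
Implicit Types (g dg : R -> R).

Let derive1_is_derive {g dg} {x : R} :
  is_derive x (1 : R) g (dg x) -> derive1 g x = dg x.
Proof. by move=> gx; rewrite derive1E derive_val. Qed.

Let continuous_is_derive g dg a b : (forall x, is_derive x (1 : R) g (dg x)) ->
  {within `[a, b], continuous g}.
Proof. by move=> gd; apply: derivable_within_continuous => x _; case: (gd x). Qed.

Lemma is_derive_ge0_ndecr {g dg} : (forall x, is_derive x (1 : R) g (dg x)) ->
  (forall x, 0 <= dg x) -> {homo g : x y / x <= y}.
Proof.
move=> gd dg0 x y xy.
apply: (@ger0_derive1_ndecr _ g x y) => //.
- by move=> z _; rewrite (derive1_is_derive (gd z)).
- exact: continuous_is_derive gd.
Qed.

Lemma is_derive_min0 {g dg} : (forall x, is_derive x (1 : R) g (dg x)) ->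
  (forall x, 0 <= dg x * x) -> forall s, g 0 <= g s.
Proof.
move=> gd dgx s; have [s0|s0] := leP 0 s.
  apply: (@ger0_derive1_ndecr _ g 0 s) => //.
  - move=> z; rewrite in_itv /= => /andP[z0 _]; rewrite (derive1_is_derive (gd z)).
    by rewrite -(pmulr_lge0 _ z0).
  - exact: continuous_is_derive gd.
apply: (@ler0_derive1_nincr _ g s 0) => //; last exact: (ltW s0).
- move=> z; rewrite in_itv /= => /andP[_ z0]; rewrite (derive1_is_derive (gd z)).
  by rewrite -(nmulr_lge0 _ z0).
- exact: continuous_is_derive gd.
Qed.

End DerivativeSign.

Section HoeffdingBernoulli.
Variables (R : realType) (mu : R).
Hypothesis mu01 : 0 <= mu <= 1.

Let mgf (x : R) := 1 - mu + mu * expR x.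
Let tilt (x : R) := mu * expR x / mgf x.
Let dgap (x : R) := mu + x / 4 - tilt x.
Let gap (x : R) := mu * x + x ^+ 2 / 8 - ln (mgf x).

(* [gap 0 = dgap 0 = 0] and [dgap] has the square derivative
   [1/4 - tilt x (1 - tilt x)], so [gap] is minimal at [0]. *)

Let mgf_gt0 x : 0 < mgf x.
Proof.
have := expR_gt0 x; case/andP: mu01 => mu0 mu1.
rewrite /mgf; nra.
Qed.

Let mgf_neq0 x : mgf x != 0. Proof. by rewrite gt_eqF. Qed.

Let is_derive_mgf x : is_derive x (1 : R) mgf (mu * expR x).
Proof. by apply: is_derive_eq; rewrite add0r mul1r. Qed.

Let is_derive_tilt x : is_derive x (1 : R) tilt (tilt x - tilt x ^+ 2).
Proof.
have dV := is_deriveV (mgf_neq0 x) (is_derive_mgf x).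
by apply: is_derive_eq; rewrite /GRing.scale /= /tilt; field.
Qed.

Let is_derive_dgap x : is_derive x (1 : R) dgap ((tilt x - 1 / 2) ^+ 2).
Proof.
have dt := is_derive_tilt x.
by apply: is_derive_eq; rewrite /GRing.scale /=; field.
Qed.

Let is_derive_gap x : is_derive x (1 : R) gap (dgap x).
Proof.
have dl : is_derive x (1 : R) (@ln R \o mgf) ((mgf x)^-1 * (mu * expR x)).
  by apply: is_derive1_comp; [exact: is_derive1_ln | exact: is_derive_mgf].
by apply: is_derive_eq; rewrite /GRing.scale /= /dgap /tilt; field.
Qed.

Let dgap_sign x : 0 <= dgap x * x.
Proof.
have dgap0 : dgap 0 = 0.
  by rewrite /dgap /tilt /mgf expR0 mulr1 subrK divr1 mul0r addr0 subrr.
have dgap_homo := is_derive_ge0_ndecr is_derive_dgap (fun x => sqr_ge0 _).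
have [x0|x0] := leP 0 x; first by rewrite mulr_ge0 // -dgap0; apply: dgap_homo.
apply: mulr_le0; last exact: ltW.
by rewrite -dgap0; apply: dgap_homo; exact: ltW.
Qed.

Lemma bernoulli_mgf_le s : 1 - mu + mu * expR s <= expR (mu * s + s ^+ 2 / 8).
Proof.
have : gap 0 <= gap s := is_derive_min0 is_derive_gap dgap_sign s.
rewrite /gap /mgf expR0 mulr1 subrK ln1 mulr0 expr0n /= mul0r addr0 subrr.
by rewrite subr_ge0 -ler_expR lnK // posrE -/(mgf s).
Qed.

End HoeffdingBernoulli.

Lemma expR_le_chord (R : realType) (th s : R) : 0 <= th <= 1 ->
  expR (th * s) <= 1 - th + th * expR s.
Proof.
case/andP=> th0 th1.
have := convex_expR (Itv01 th0 th1) (s : R^o) (0 : R^o).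
rewrite !convRE /= mulr0 addr0 expR0 mulr1 => /le_trans; apply.
by rewrite /unstable.onem; lra.
Qed.

Lemma hoeffding_lemma_finite (R : realType) (K : finType) (q x : K -> R) (a s : R) :
  (forall k, 0 <= q k) -> \sum_k q k = 1 -> (forall k, a <= x k <= a + 1) ->
  \sum_k q k * expR (s * x k) <= expR (s * (\sum_k q k * x k) + s ^+ 2 / 8).
Proof.
move=> q0 q1 xa; set mu := \sum_k q k * (x k - a).
have meanE : \sum_k q k * x k = mu + a.
  by rewrite /mu (eq_bigr _ (fun k _ => mulrBr _ _ _)) sumrB -mulr_suml q1 mul1r subrK.
have mu01 : 0 <= mu <= 1.
  apply/andP; split.
    by apply: sumr_ge0 => k _; apply: mulr_ge0 => //; have := xa k; lra.
  by rewrite -q1; apply: ler_sum => k _; have := xa k; have := q0 k; nra.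
apply: (@le_trans _ _
    (\sum_k q k * (expR (s * a) * (1 - (x k - a) + (x k - a) * expR s)))).
  apply: ler_sum => k _; apply: ler_wpM2l => //.
  have -> : s * x k = s * a + (x k - a) * s by ring.
  rewrite expRD ler_wpM2l ?expR_ge0 //.
  by apply: expR_le_chord; have := xa k; lra.
have -> : \sum_k q k * (expR (s * a) * (1 - (x k - a) + (x k - a) * expR s)) =
    expR (s * a) * (1 - mu + mu * expR s).
  transitivity (\sum_k (expR (s * a) * q k - expR (s * a) * (q k * (x k - a))
      + expR (s * a) * expR s * (q k * (x k - a)))).
    by apply: eq_bigr => k _; ring.
  by rewrite big_split sumrB /= -!mulr_sumr q1 -/mu; ring.
have -> : s * (\sum_k q k * x k) + s ^+ 2 / 8 = s * a + (mu * s + s ^+ 2 / 8).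
  by rewrite meanE; ring.
by rewrite expRD ler_wpM2l ?expR_ge0 // bernoulli_mgf_le.
Qed.

Section PhiBounds.
Variable R : realType.

Let phiE (n N : nat) :
  phi R n N = 2 * ((1 + Num.sqrt (n%:R / N%:R) ^+ 2) / (1 + Num.sqrt (n%:R / N%:R))) ^+ 2.
Proof. by rewrite /phi sqr_sqrtr // divr_ge0. Qed.

(* The minimum of (1 + s^2) / (1 + s) over s >= 0 is 2 (sqrt 2 - 1) > 0.828. *)
Lemma phi_gt (n N : nat) : 137 / 100 < phi R n N.
Proof.
rewrite phiE; set s := Num.sqrt _; have s0 : 0 <= s := sqrtr_ge0 _.
have : 207 / 250 <= (1 + s ^+ 2) / (1 + s).
  by rewrite ler_pdivlMr; [have := sqr_ge0 (s - 207 / 500); nra | lra].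
nra.
Qed.

Lemma phi_le (n N : nat) : phi R n N <= 2 * (1 + n%:R / N%:R).
Proof.
rewrite phiE -[in X in _ <= X](@sqr_sqrtr _ (n%:R / N%:R)) ?divr_ge0 //.
set s := Num.sqrt _; have s0 : 0 <= s := sqrtr_ge0 _.
set y := (1 + s ^+ 2) / (1 + s).
have yE : y * (1 + s) = 1 + s ^+ 2 by rewrite divfK // gt_eqF //; lra.
have y0 : 0 <= y by rewrite divr_ge0 //; nra.
have : y <= 1 + s by rewrite ler_pdivrMr; nra.
nra.
Qed.

End PhiBounds.

Section Grid.
Context {R : realType}.
Variable m : nat.
Hypothesis m_gt0 : (0 < m)%N.

Definition grid_bin (k : nat) : set R := `[k%:R / m%:R, k.+1%:R / m%:R[%classic.

(* Bins of width [1/m]; [0, 1] is covered by the bins of index [<= m],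
   the last one containing [1]. *)
Definition grid_index (z : R) : 'I_m.+1 := inord (Num.truncn (z * m%:R)).

Let m_invR : 0 < m%:R^-1 :> R. Proof. by rewrite invr_gt0 ltr0n. Qed.

Lemma grid_bin_measurable k : measurable (grid_bin k).
Proof. exact: measurable_itv. Qed.

Lemma grid_bin_uniq k k' z : grid_bin k z -> grid_bin k' z -> k = k'.
Proof.
rewrite /grid_bin /= !in_itv /= => /andP[kz zk] /andP[k'z zk'].
have lt_k_k' : (k < k'.+1)%N.
  by have := le_lt_trans kz zk'; rewrite ltr_pM2r // ltr_nat.
have lt_k'_k : (k' < k.+1)%N.
  by have := le_lt_trans k'z zk; rewrite ltr_pM2r // ltr_nat.
by apply/eqP; rewrite eqn_leq -ltnS lt_k_k' -ltnS lt_k'_k.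
Qed.

Lemma grid_binP z : 0 <= z <= 1 -> grid_bin (grid_index z) z.
Proof.
case/andP=> z0 z1; have zm0 : 0 <= z * m%:R by rewrite mulr_ge0.
have zm : (Num.truncn (z * m%:R) <= m)%N.
  by rewrite truncn_le_nat (@le_lt_trans _ _ m%:R) ?ltr_nat // ler_piMl.
rewrite /grid_index inordK ?ltnS //.
have /andP[lo hi] := truncn_itv zm0.
rewrite /grid_bin /= in_itv /= ler_pdivrMr ?ltr0n // lo /=.
by rewrite ltr_pdivlMr ?ltr0n.
Qed.

End Grid.

Lemma le_expR_limn (R : realType) (p a b : R) :
  (forall m, (0 < m)%N -> p <= expR (a + b / m%:R)) -> p <= expR a.
Proof.
move=> le_p; have [p0|p_gt0] := leP p 0; first by rewrite (le_trans p0) ?expR_ge0.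
rewrite -[p]lnK ?posrE // ler_expR; apply/negP => /negP; rewrite -ltNge => gap.
have eps_gt0 : 0 < ln p - a by rewrite subr_gt0.
set m := (Num.truncn (b / (ln p - a))).+1.
have bm : b < m%:R * (ln p - a).
  by rewrite -ltr_pdivrMr //; exact: truncnS_gt.
have := le_p m isT; rewrite -[p]lnK ?posrE // ler_expR -lerBlDl.
by rewrite ler_pdivlMr ?ltr0n // mulrC leNgt bm.
Qed.

Section WeightedSumTail.
Context {d : measure_display} {T : measurableType d} {R : realType}.
Variables (P : probability T R) (I : finType) (Z : I -> {RV P >-> R}) (c : I -> R).
Hypotheses (Z_indep : mutually_independent Z) (Z_id : identically_distributed Z).
Hypothesis Z01 : forall i t, 0 <= Z i t <= 1.

Let wsum (t : T) := \sum_i c i * Z i t.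

Let wsum_tail_measurable (T0 : R) : measurable [set t | T0 <= wsum t].
Proof.
have wsum_mfun : measurable_fun setT wsum.
  apply: measurable_sum => i.
  exact/measurable_realfun.measurable_funM/measurable_funPT.
have := wsum_mfun measurableT _ (measurable_itv `[T0, +oo[).
by rewrite setTI; congr measurable; apply/seteqP; split => t /=; rewrite in_itv /= andbT.
Qed.

Section FixedGrid.
Variable m : nat.
Hypothesis m_gt0 : (0 < m)%N.

Local Notation bin := (@grid_bin R m).
Local Notation grid := {ffun I -> 'I_m.+1}.

Let pr i k := fine (P (Z i @^-1` bin k)).
Let cell (v : grid) : set T :=
  \bigcap_(i in [set i | i \in [set: I]%SET]) (Z i @^-1` bin (v i)).
(* The endpoint of bin [k] at which [c i * z] is largest. *)
Let node i (k : nat) : R := (if 0 <= c i then k.+1%:R else k%:R) / m%:R.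
Let score (v : grid) := \sum_i c i * node i (v i).

Let bin_preimage_measurable i k : measurable (Z i @^-1` bin k).
Proof. by apply: measurable_funPTI; exact: grid_bin_measurable. Qed.

Let prE i k : P (Z i @^-1` bin k) = (pr i k)%:E.
Proof. by rewrite fineK // fin_num_measure. Qed.

Let pr_ge0 i k : 0 <= pr i k.
Proof. by rewrite fine_ge0 // measure_ge0. Qed.

Let pr_sum1 i : \sum_(k < m.+1) pr i k = 1.
Proof.
have disj : trivIset setT (fun k : 'I_m.+1 => Z i @^-1` bin k).
  move=> k k' _ _ [t [/= tk tk']]; apply: val_inj; exact: grid_bin_uniq tk tk'.
have cover : \big[setU/set0]_(k < m.+1) (Z i @^-1` bin k) = setT.
  apply/seteqP; split => // t _; rewrite -bigcup_seq.
  by exists (grid_index m (Z i t)); [rewrite /= mem_index_enum | exact: grid_binP].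
have := measure_bigsetU_ord P predT (fun k => bin_preimage_measurable i k) disj.
rewrite cover (eq_bigr (fun k : 'I_m.+1 => (pr i k)%:E)) ?sumEFin => [sum_pr|k _].
  by have := probability_setT P; rewrite sum_pr => -[].
exact: prE.
Qed.

Let pr_id i j k : pr i k = pr j k.
Proof. by rewrite /pr; congr fine; exact: (congr1 (fun mu => mu (bin k)) (Z_id i j)). Qed.

Let cellE v : P (cell v) = (\prod_i pr i (v i))%:E.
Proof.
rewrite Z_indep; last by move=> i; exact: grid_bin_measurable.
rewrite -prodEFin; apply: eq_big => [i|i _]; last exact: prE.
by rewrite finset.in_setT.
Qed.

Let cell_measurable v : measurable (cell v).
Proof. by apply: fin_bigcap_measurable => // i _; exact: bin_preimage_measurable. Qed.

Let cell_trivIset : trivIset setT cell.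
Proof.
move=> v v' _ _ [t [/= vt v't]]; apply/ffunP => i; apply: val_inj.
exact: grid_bin_uniq (vt i (finset.in_setT i)) (v't i (finset.in_setT i)).
Qed.

Let cell_of (t : T) : grid := [ffun i => grid_index m (Z i t)].

Let mem_cell_of t : cell (cell_of t) t.
Proof. by move=> i _; rewrite /= ffunE; exact: grid_binP. Qed.

Let wsum_le_score t : wsum t <= score (cell_of t).
Proof.
apply: ler_sum => i _; have := mem_cell_of t i (finset.in_setT i).
rewrite /node /grid_bin /= ffunE /= in_itv /= => /andP[lo hi].
case: ifPn => [c0|c0]; first by rewrite ler_wpM2l // ltW.
by rewrite ler_wnM2l // ltW // ltNge.
Qed.

Let tail_le_cells (T0 : R) :
  (P [set t | (T0 <= wsum t)%R] <= (\sum_(v | (T0 <= score v)%R) \prod_i pr i (v i))%:E)%E.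
Proof.
set D := [set` fun v : grid => T0 <= score v].
have sub : [set t | T0 <= wsum t] `<=` \bigcup_(v in D) cell v.
  move=> t /= tail; exists (cell_of t); last exact: mem_cell_of.
  exact: le_trans tail (wsum_le_score t).
apply: le_trans (le_measure P _ _ sub) _; rewrite ?inE.
- exact: wsum_tail_measurable.
- exact: fin_bigcup_measurable.
rewrite measure_fin_bigcup //; [|exact: finite_finset|exact: sub_trivIset cell_trivIset].
rewrite -sumEFin [X in (_ <= X)%E]bigfs ?index_enum_uniq //; last first.
  by move=> v _; rewrite mem_index_enum.
rewrite (eq_fsbigr (fun v : grid => (\prod_i pr i (v i))%:E)) // => v _.
exact: cellE.
Qed.

Let chernoff_grid (T0 lam : R) : 0 <= lam ->
  \sum_(v | T0 <= score v) \prod_i pr i (v i) <=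
  expR (- (lam * T0)) * \prod_i \sum_(k < m.+1) pr i k * expR (lam * c i * node i k).
Proof.
move=> lam0; rewrite bigA_distr_bigA /= mulr_sumr.
rewrite [X in _ <= X](bigID (fun v : grid => T0 <= score v)) /=.
apply: ler_wpDr.
  apply: sumr_ge0 => v _; rewrite mulr_ge0 ?expR_ge0 // prodr_ge0 // => i _.
  by rewrite mulr_ge0 ?expR_ge0.
apply: ler_sum => v T0v; rewrite big_split /= -expR_sum mulrCA -expRD.
rewrite ler_peMr ?prodr_ge0 // -expR0 ler_expR.
have -> : \sum_i lam * c i * node i (v i) = lam * score v.
  by rewrite mulr_sumr; apply: eq_bigr => i _; rewrite mulrA.
by rewrite -mulrN -mulrDr mulr_ge0 // addrC subr_ge0.
Qed.

Let grid_hoeffding (lam : R) i :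
  \sum_(k < m.+1) pr i k * expR (lam * c i * node i k) <=
  expR (lam * c i * (\sum_(k < m.+1) pr i k * node i k) + (lam * c i) ^+ 2 / 8).
Proof.
apply: (@hoeffding_lemma_finite _ _ _ _ (if 0 <= c i then m%:R^-1 else 0)).
- by move=> k; exact: pr_ge0.
- exact: pr_sum1.
- move=> k; have k0 : 0 <= k%:R / m%:R :> R by rewrite divr_ge0.
  have k1 : k%:R / m%:R <= 1 :> R by rewrite ler_pdivrMr ?ltr0n // mul1r ler_nat -ltnS.
  rewrite /node; case: ifP => _; last by rewrite add0r k0 k1.
  by rewrite -natr1 mulrDl mul1r lerDr k0 addrC lerD2l.
Qed.

Let grid_mean i := \sum_(k < m.+1) pr i k * (k%:R / m%:R).

Let grid_mean_id i j : grid_mean i = grid_mean j.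
Proof. by apply: eq_bigr => k _; rewrite (pr_id i j). Qed.

Let node_mean i : \sum_(k < m.+1) pr i k * node i k =
  grid_mean i + (if 0 <= c i then m%:R^-1 else 0).
Proof.
rewrite /node; case: ifP => _; last by rewrite addr0.
under eq_bigr do rewrite -natr1 mulrDl mul1r mulrDr.
by rewrite big_split /= -mulr_suml pr_sum1 mul1r.
Qed.

Lemma weighted_sum_tail_grid (T0 lam : R) : 0 <= lam -> \sum_i c i = 0 ->
  (P [set t | (T0 <= \sum_i c i * Z i t)%R] <=
   (expR (- (lam * T0) + lam ^+ 2 * (\sum_i c i ^+ 2) / 8
          + lam * (\sum_i `|c i|) / m%:R))%:E)%E.
Proof.
move=> lam0 c_sum0; apply: (le_trans (tail_le_cells T0)); rewrite lee_fin.
apply: (le_trans (chernoff_grid T0 lam lam0)); rewrite -!addrA expRD ler_wpM2l ?expR_ge0 //.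
apply: (@le_trans _ _ (\prod_i expR (lam * c i * (\sum_(k < m.+1) pr i k * node i k)
    + (lam * c i) ^+ 2 / 8))).
  apply: ler_prod => i _; rewrite grid_hoeffding andbT.
  by apply: sumr_ge0 => k _; rewrite mulr_ge0 ?expR_ge0.
have mean_c0 : \sum_i c i * grid_mean i = 0.
  have [i0 _|noI] := pickP (@predT I); last by rewrite big_pred0.
  rewrite (eq_bigr (fun i => c i * grid_mean i0)) => [|i _]; last by rewrite (grid_mean_id i i0).
  by rewrite -mulr_suml c_sum0 mul0r.
have node_term i : lam * c i * \sum_(k < m.+1) pr i k * node i k <=
    lam * (c i * grid_mean i) + lam * `|c i| / m%:R.
  rewrite node_mean mulrDr -mulrA lerD2l; case: ifP => c0.
    by rewrite ger0_norm // mulrA.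
  by rewrite !mulr0 divr_ge0 ?mulr_ge0.
rewrite -expR_sum ler_expR.
apply: (@le_trans _ _ (\sum_i (lam * (c i * grid_mean i) + lam * `|c i| / m%:R
    + (lam * c i) ^+ 2 / 8))).
  by apply: ler_sum => i _; rewrite lerD2r node_term.
rewrite !big_split /= -mulr_sumr mean_c0 mulr0 add0r addrC.
under eq_bigr do rewrite exprMn.
by rewrite -!mulr_suml -!mulr_sumr.
Qed.

End FixedGrid.

Lemma weighted_sum_tail (T0 lam : R) : 0 <= lam -> \sum_i c i = 0 ->
  (P [set t | (T0 <= \sum_i c i * Z i t)%R] <=
   (expR (- (lam * T0) + lam ^+ 2 * (\sum_i c i ^+ 2) / 8))%:E)%E.
Proof.
move=> lam0 c_sum0; rewrite -(@fineK _ (P _)) ?fin_num_measure // lee_fin.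
apply: (@le_expR_limn _ _ _ (lam * \sum_i `|c i|)) => m m_gt0.
by rewrite -lee_fin fineK ?fin_num_measure // weighted_sum_tail_grid.
Qed.

End WeightedSumTail.

Arguments weighted_sum_tail {d T R P I Z c}.

Lemma sum_ord_split_if (V : nmodType) (n N : nat) (a b : V) :
  \sum_(i < n + N) (if (i < n)%N then a else b) = a *+ n + b *+ N.
Proof.
rewrite big_split_ord /= (eq_bigr (fun=> a)) => [|i _]; last by rewrite /= ltn_ord.
rewrite [X in _ + X](eq_bigr (fun=> b)) => [|i _]; last by rewrite /= ltnNge leq_addr.
by rewrite !sumr_const !card_ord.
Qed.

Section TwoSample.
Context {d : measure_display} {T : measurableType d} {R : realType}.
Variables (P : probability T R) (n N : nat) (Z : 'I_(n + N) -> {RV P >-> R}).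
Hypotheses (n_gt0 : (0 < n)%N) (N_gt0 : (0 < N)%N).

Definition two_sample_weight (i : 'I_(n + N)) : R := if (i < n)%N then N%:R else - n%:R.

Lemma sum_two_sample_weight : \sum_i two_sample_weight i = 0.
Proof. by rewrite sum_ord_split_if mulNrn -!mulrnA mulnC subrr. Qed.

Lemma sum_two_sample_weight_sqr :
  \sum_i two_sample_weight i ^+ 2 = n%:R * N%:R * (n + N)%:R.
Proof.
rewrite (eq_bigr (fun i : 'I_(n + N) => if (i < n)%N then N%:R ^+ 2 else n%:R ^+ 2)).
  by rewrite sum_ord_split_if natrD; ring.
by move=> i _; rewrite /two_sample_weight; case: ifP; rewrite ?sqrrN.
Qed.

Lemma two_sample_weighted_sumE t :
  \sum_i two_sample_weight i * Z i t = n%:R * (n + N)%:R * (Xbar Z t - Xbar' Z t).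
Proof.
have n0 : n%:R != 0 :> R by rewrite pnatr_eq0 -lt0n.
have nN0 : (n + N)%:R != 0 :> R by rewrite pnatr_eq0 addn_eq0 negb_and -lt0n n_gt0.
rewrite /Xbar /Xbar' [in RHS]big_mkcond /=.
transitivity ((n + N)%:R * \sum_(i < n + N) (if (i < n)%N then Z i t else 0)
  - n%:R * \sum_(i < n + N) Z i t).
  rewrite !mulr_sumr -sumrB; apply: eq_bigr => i _.
  by rewrite /two_sample_weight natrD; case: ifP => _; ring.
by field; rewrite -natrD nN0 n0.
Qed.

Variable delta : R.
Hypothesis delta_ge0 : 0 <= delta.
Hypotheses (Z_indep : mutually_independent Z) (Z_id : identically_distributed Z).
Hypothesis Z01 : forall i t, 0 <= Z i t <= 1.

Let nnN_gt0 : 0 < n%:R * (n + N)%:R :> R.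
Proof. by rewrite mulr_gt0 ?ltr0n ?addn_gt0 ?n_gt0. Qed.

(* Hoeffding's bound with the optimal parameter [lam = 4 delta / N]. *)
Let tail_of_weights (c : 'I_(n + N) -> R) :
  \sum_i c i = 0 -> \sum_i c i ^+ 2 = n%:R * N%:R * (n + N)%:R ->
  (P [set t | (delta * (n%:R * (n + N)%:R) <= \sum_i c i * Z i t)%R] <=
   (expR (- (2 * (1 + n%:R / N%:R) * delta ^+ 2 * n%:R)))%:E)%E.
Proof.
move=> c_sum0 c_sqr; have N0 : N%:R != 0 :> R by rewrite pnatr_eq0 -lt0n.
have lam0 : 0 <= 4 * delta / N%:R by rewrite divr_ge0 ?mulr_ge0.
apply: le_trans (weighted_sum_tail Z_indep Z_id Z01 _ _ lam0 c_sum0) _.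
rewrite lee_fin ler_expR c_sqr le_eqVlt; apply/orP; left; apply/eqP.
by field.
Qed.

Lemma two_sample_lower_tail :
  (P [set t | (Xbar' Z t <= Xbar Z t - delta)%R] <=
   (expR (- (2 * (1 + n%:R / N%:R) * delta ^+ 2 * n%:R)))%:E)%E.
Proof.
rewrite (eq_set (Q := fun t => delta * (n%:R * (n + N)%:R) <=
    \sum_i two_sample_weight i * Z i t)).
  exact: tail_of_weights sum_two_sample_weight sum_two_sample_weight_sqr.
move=> t; rewrite two_sample_weighted_sumE [in RHS]mulrC ler_pM2l //.
by rewrite propeqE; split => ?; lra.
Qed.

Lemma two_sample_upper_tail :
  (P [set t | (Xbar' Z t >= Xbar Z t + delta)%R] <=
   (expR (- (2 * (1 + n%:R / N%:R) * delta ^+ 2 * n%:R)))%:E)%E.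
Proof.
rewrite (eq_set (Q := fun t => delta * (n%:R * (n + N)%:R) <=
    \sum_i - two_sample_weight i * Z i t)).
  apply: tail_of_weights; first by rewrite sumrN sum_two_sample_weight oppr0.
  by under eq_bigr do rewrite sqrrN; exact: sum_two_sample_weight_sqr.
move=> t; rewrite (eq_bigr _ (fun i _ => mulNr _ _)) sumrN two_sample_weighted_sumE.
rewrite -mulrN [in RHS]mulrC ler_pM2l //.
by rewrite propeqE; split => ?; lra.
Qed.

End TwoSample.

Theorem theorem2 (R : realType) (d : measure_display) (T : measurableType d)
  (P : probability T R) (n N : nat) (Z : 'I_(n + N) -> {RV P >-> R}) :
  (1 <= n)%N -> (1 <= N)%N ->
  mutually_independent Z -> identically_distributed Z ->
  (forall i t, 0 <= Z i t <= 1) ->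
  (137 / 100 : R) < phi R n N /\
  (forall delta : R, 0 <= delta ->
     (P [set t | (Xbar' Z t <= Xbar Z t - delta)%R]
        <= (2 * expR (- (phi R n N * delta ^+ 2 * n%:R)))%R%:E)%E /\
     (P [set t | (Xbar' Z t >= Xbar Z t + delta)%R]
        <= (2 * expR (- (phi R n N * delta ^+ 2 * n%:R)))%R%:E)%E).
Proof.
move=> n_gt0 N_gt0 Z_indep Z_id Z01; split; first exact: phi_gt.
move=> delta delta0.
have weaken : ((expR (- (2 * (1 + n%:R / N%:R) * delta ^+ 2 * n%:R)))%:E <=
    (2 * expR (- (phi R n N * delta ^+ 2 * n%:R)))%:E)%E.
  rewrite lee_fin (@le_trans _ _ (expR (- (phi R n N * delta ^+ 2 * n%:R)))) //.
    by rewrite ler_expR lerN2 !ler_wpM2r ?sqr_ge0 ?phi_le.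
  by rewrite ler_peMl ?expR_ge0 // ler1n.
split; apply: le_trans weaken.
- exact: two_sample_lower_tail.
- exact: two_sample_upper_tail.
Qed.
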